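(* Let $\mathcal{D}$ be the arena of a $p$-periodic graph on $V$, $k\ge 1$, and $\mathcal{A}^k$ an augmented $k$-arena of $\mathcal{D}$. Let $t\in\mathbb{Z}_p$, $X=\langle x_1,\dots,x_k\rangle\in[V]^k$, $y\in V$ and $Z=\langle z_1,\dots,z_k\rangle\in[V]^k$ be such that $z_j\in\Gamma_t(x_j,\mathcal{D})$ for all $1\le j\le k$ (i.e., there is a bijection between the elements of the multisets $X$ and $Z$ mapping each element to one of its out-neighbours in $\mathcal{D}$ at slice $t$). If $(t,y)$ is a shadow $k$-corner of $([t+1]_p,Z)$ with respect to $\mathcal{A}^k$, then $\mathcal{A}^k\cup\{(t,X,y)\}$ is an augmented $k$-arena of $\mathcal{D}$.
   Context: Let $V$ be a finite set and $p\ge 1$ an integer; $[t]_p$ denotes $t\bmod p$. A $p$-periodic graph is the sequence of directed graphs $G_t=(V,E_{[t]_p})$ with $E_0,\dots,E_{p-1}\subseteq V\times V$ (self-loops allowed), each sinkless. Its arena $\mathcal{D}$ is the directed graph on $\mathbb{Z}_p\times V$ with $((i,u),([i+1]_p,v))\in E(\mathcal{D})$ iff $(u,v)\in E_i$; $\Gamma_t(u,\mathcal{D})=\{v:((t,u),([t+1]_p,v))\in E(\mathcal{D})\}$. $[V]^k$ denotes the set of multisets of $k$ elements of $V$. Game with $k$ cops: in each round $t$, with cops at $C=\langle c_1,\dots,c_k\rangle$ and robber at $r$, every cop $j$ must move to some $c_j'\in\Gamma_{[t]_p}(c_j,\mathcal{D})$; if some $c_j'=r$ the cops win; otherwise the robber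 must move to some $r'\in\Gamma_{[t]_p}(r,\mathcal{D})$ and the next round starts with cops at $\langle c_1',\dots,c_k'\rangle$ and robber at $r'$. A configuration $(t,C,r)$ ($t\in\mathbb{Z}_p$, $C\in[V]^k$, $r\in V$) is the state at the start of a round with index $\equiv t\pmod p$, cops to move; it is $k$-copwin if from it the cops can force capture in finitely many rounds against every robber strategy. A $k$-hyperedge is a triple $(t,X,y)$ with $t\in\mathbb{Z}_p$, $X\in[V]^k$, $y\in V$. The $k$-arena $\mathcal{D}^k$ is the set of $k$-hyperedges $(t,X,y)$ with $((t,x),([t+1]_p,y))\in E(\mathcal{D})$ for some $x\in X$. An augmented $k$-arena is a set $\mathcal{A}^k\supseteq\mathcal{D}^k$ of $k$-hyperedges such that each $(t,X,y)\in\mathcal{A}^k$ is a $k$-copwin configuration. For a set $\mathcal{A}^k$ of $k$-hyperedges, $\Gamma_t(X,\mathcal{A}^k)=\{y\in V:(t,X,y)\in\mathcal{A}^k\}$. Given $\mathcal{A}^k$, $(t,y)$ is a shadow $k$-corner of $([t+1]_p,Z)$ (and $Z$ a shadow $k$-cover of $(t,y)$), where $Z\in[V]^k$, if $y\notin Z$ and $\Gamma_t(y,\mathcal{D})\subseteq\Gamma_{[t+1]_p}(Z,\mathcal{A}^k)$. *)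

From mathcomp Require Import all_boot.
Set Implicit Arguments. Unset Strict Implicit. Unset Printing Implicit Defensive.

Section Game.
Variables (V : finType) (p : nat).

(* A p-periodic graph: E i is the edge relation of slice i (self-loops allowed). *)
Definition periodic_graph := 'I_p -> rel V.

Definition sinkless (E : periodic_graph) : Prop :=
  forall (i : 'I_p) (u : V), exists v, E i u v.

Definition tsucc (t : 'I_p) : 'I_p := ordS t.

Definition arena_edge (E : periodic_graph) (a b : 'I_p * V) : bool :=
  (b.1 == tsucc a.1) && E a.1 a.2 b.2.

Definition Gamma (E : periodic_graph) (t : 'I_p) (u : V) : {set V} :=
  [set v | arena_edge E (t, u) (tsucc t, v)].

(* Multisets over V, represented by their multiplicity functions. *)
Definition mset := {ffun V -> nat}.
Definition mset_of (k : nat) (c : k.-tuple V) : mset := [ffun v => count_mem v c].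
Definition msize (X : mset) : nat := \sum_(v : V) X v.
Definition is_kmset (k : nat) (X : mset) : Prop := msize X = k.

(* k-copwin configurations (t, C, r): least fixed point of one round of play.
   The cops (listed in some order cs, representing the multiset C) all move
   along arena edges to cs'; either some cop lands on the robber, or for every
   robber move r' the resulting configuration is again k-copwin. *)
Inductive copwin (E : periodic_graph) (k : nat) : 'I_p -> mset -> V -> Prop :=
| copwin_step (t : 'I_p) (C : mset) (r : V) (cs cs' : k.-tuple V) :
    mset_of cs = C ->
    (forall j : 'I_k, tnth cs' j \in Gamma E t (tnth cs j)) ->
    (r \in cs' \/
     forall r', r' \in Gamma E t r -> copwin E k (tsucc t) (mset_of cs') r') ->
    copwin E k t C r.

Definition hedge := ('I_p * mset * V)%type.
Definition hedge_set := hedge -> Prop.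

Definition is_khedge (k : nat) (h : hedge) : Prop := is_kmset k h.1.2.

Definition karena (E : periodic_graph) (k : nat) : hedge_set :=
  fun h => let: (t, X, y) := h in
    is_kmset k X /\ exists x : V, 0 < X x /\ arena_edge E (t, x) (tsucc t, y).

Definition augmented_karena (E : periodic_graph) (k : nat) (A : hedge_set) : Prop :=
  (forall h, karena E k h -> A h) /\
  (forall h, A h -> is_khedge k h /\ copwin E k h.1.1 h.1.2 h.2).

Definition GammaA (A : hedge_set) (t : 'I_p) (X : mset) : V -> Prop :=
  fun y => A (t, X, y).

Definition shadow_corner (E : periodic_graph) (k : nat) (A : hedge_set)
    (t : 'I_p) (y : V) (Z : mset) : Prop :=
  is_kmset k Z /\ Z y = 0 /\
  (forall v, v \in Gamma E t y -> GammaA A (tsucc t) Z v).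

End Game.

(* Proof: from (t, X, y) the cops move along the matching X -> Z.  The robber,
   sitting at y, must move to some r' in Gamma_t(y, D), and the shadow-corner
   condition puts ([t+1]_p, Z, r') into the augmented arena, so that
   configuration is k-copwin.  Hence (t, X, y) is k-copwin, and adding a
   k-copwin k-hyperedge to an augmented k-arena keeps it augmented. *)

From mathcomp Require Import all_boot.

Lemma sum_count_mem (T : finType) (s : seq T) :
  \sum_(v : T) count_mem v s = size s.
Proof.
elim: s => [|x s IHs] /=; first by rewrite big1.
rewrite big_split /= IHs (bigD1 x) //= eqxx big1 ?addn0 ?add1n // => v.
by rewrite eq_sym => /negbTE ->.
Qed.

Section AugmentedArena.
Variables (V : finType) (p : nat) (E : periodic_graph V p) (k : nat).

Lemma msize_mset_of (cs : k.-tuple V) : msize (mset_of cs) = k.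
Proof.
rewrite /msize; under eq_bigr => v _ do rewrite ffunE.
by rewrite sum_count_mem size_tuple.
Qed.

Lemma augmented_karena_copwin (A : hedge_set V p) t X y :
  augmented_karena E k A -> A (t, X, y) -> copwin E k t X y.
Proof. by case=> _ hA /hA []. Qed.

Lemma copwin_shadow_corner (A : hedge_set V p) t (xs zs : k.-tuple V) y :
    augmented_karena E k A ->
    (forall j : 'I_k, tnth zs j \in Gamma E t (tnth xs j)) ->
    shadow_corner E k A t y (mset_of zs) ->
  copwin E k t (mset_of xs) y.
Proof.
move=> hA move_xs [_ [_ cover_Z]].
apply: (copwin_step (cs' := zs)) move_xs _ => //.
by right=> r' /cover_Z; apply: augmented_karena_copwin.
Qed.

Lemma augmented_karena_add (A : hedge_set V p) (h : hedge V p) :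
    augmented_karena E k A -> is_khedge k h -> copwin E k h.1.1 h.1.2 h.2 ->
  augmented_karena E k (fun h' => A h' \/ h' = h).
Proof.
move=> [sub_A win_A] h_k h_win; split=> [h' /sub_A|h' [/win_A //|->]]; by [left|].
Qed.

End AugmentedArena.

Theorem theorem7 (V : finType) (p : nat) (hp : 0 < p) (E : periodic_graph V p)
  (hE : sinkless E) (k : nat) (hk : 0 < k) (A : hedge_set V p)
  (hA : augmented_karena E k A) (t : 'I_p) (xs zs : k.-tuple V) (y : V) :
  (forall j : 'I_k, tnth zs j \in Gamma E t (tnth xs j)) ->
  shadow_corner E k A t y (mset_of zs) ->
  augmented_karena E k (fun h => A h \/ h = (t, mset_of xs, y)).
Proof.
move=> move_xs corner_y; apply: augmented_karena_add => //.
  exact: msize_mset_of.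
exact: copwin_shadow_corner corner_y.
Qed.
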